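(* Consider a region discretized by the FDTD-Q scheme described in the context, with time step $\Delta t$ satisfying $$0<\Delta t<\Delta t_{\mathrm{CFL,gen}}=\frac{2}{\rho\!\left(\frac{1}{\hbar}(D_V'')^{-1/2}H(D_V'')^{-1/2}\right)},$$ where $\rho(\cdot)$ denotes the spectral radius. Then the total probability $\mathcal{P}^n=(\psi^n)^T\mathbf{P}\,\psi^n$ satisfies $\mathcal{P}^n\ge 0$ for all $n=0,1,\dots,n_t$, and the total probability and the probability current satisfy $$\frac{\mathcal{P}^{n+1}-\mathcal{P}^n}{\Delta t}=-\mathcal{I}_P^{n+\frac12},\qquad n=0,1,\dots,n_t-1.$$
   Context: Fix constants $\hbar>0$, $m>0$, cell sizes $\Delta x,\Delta y,\Delta z>0$, positive integers $n_x,n_y,n_z,n_t$ and a time step $\Delta t>0$. The region is a box made of $n_x\times n_y\times n_z$ primary cells of size $\Delta x\times\Delta y\times\Delta z$, with primary nodes $(i,j,k)$, $1\le i\le n_x+1$, $1\le j\le n_y+1$, $1\le k\le n_z+1$. Let $N=(n_x+1)(n_y+1)(n_z+1)$; vectors indexed by nodes use the ordering $i+(j-1)(n_x+1)+(k-1)(n_x+1)(n_y+1)$. Real potential values $U_{i,j,k}$ are given at the nodes; $D_U$ is the $N\times N$ diagonal matrix containing them. Let $I_p$ be the $p\times p$ identity, $\tilde I_p=\mathrm{diag}(\tfrac12,1,\dots,1,\tfrac12)$ ($p\times p$), $W_p=[0_{p\times1}\ I_p]-[I_p\ 0_{p\times 1}]$ ($p\times(p+1)$), $\otimes$ the Kronecker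 product, and $e\{p,q\}$ the $q\times 1$ vector with $1$ in position $p$ and zeros elsewhere. Define $D_V''=\Delta x\Delta y\Delta z\,\tilde I_{n_z+1}\otimes\tilde I_{n_y+1}\otimes\tilde I_{n_x+1}$; $D=[D_x\ D_y\ D_z]$ with $D_x=-I_{n_z+1}\otimes I_{n_y+1}\otimes W_{n_x}^T$, $D_y=-I_{n_z+1}\otimes W_{n_y}^T\otimes I_{n_x+1}$, $D_z=-W_{n_z}^T\otimes I_{n_y+1}\otimes I_{n_x+1}$; $D_S''=\mathrm{diag}(\Delta y\Delta z\,\tilde I_{n_z+1}\otimes\tilde I_{n_y+1}\otimes I_{n_x},\ \Delta x\Delta z\,\tilde I_{n_z+1}\otimes I_{n_y}\otimes\tilde I_{n_x+1},\ \Delta x\Delta y\,I_{n_z}\otimes\tilde I_{n_y+1}\otimes\tilde I_{n_x+1})$; $D_l'=\mathrm{diag}(\Delta x\, I_{n_x(n_y+1)(n_z+1)},\ \Delta y\, I_{(n_x+1)n_y(n_z+1)},\ \Delta z\, I_{(n_x+1)(n_y+1)n_z})$; $H=\frac{\hbar^2}{2m}D D_S''(D_l')^{-1}D^T+D_V''D_U$; $\mathbf{P}=\begin{bmatrix}D_V''&-\frac{\Delta t}{2\hbar}H\\-\frac{\Delta t}{2\hbar}H&D_V''\end{bmatrix}$. Boundary (''hanging'') variables: $L=[L_W\ L_E\ L_S\ L_N\ L_B\ L_T]$ with $L_W=I_{n_z+1}\otimes I_{n_y+1}\otimes e\{1,n_x+1\}$, $L_E=I_{n_z+1}\otimes I_{n_y+1}\otimes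 e\{n_x+1,n_x+1\}$, $L_S=I_{n_z+1}\otimes e\{1,n_y+1\}\otimes I_{n_x+1}$, $L_N=I_{n_z+1}\otimes e\{n_y+1,n_y+1\}\otimes I_{n_x+1}$, $L_B=e\{1,n_z+1\}\otimes I_{n_y+1}\otimes I_{n_x+1}$, $L_T=e\{n_z+1,n_z+1\}\otimes I_{n_y+1}\otimes I_{n_x+1}$; let $M$ be the number of columns of $L$. $D_{\hat n}=\mathrm{diag}(-I_{(n_y+1)(n_z+1)},I_{(n_y+1)(n_z+1)},-I_{(n_x+1)(n_z+1)},I_{(n_x+1)(n_z+1)},-I_{(n_x+1)(n_y+1)},I_{(n_x+1)(n_y+1)})$; $D_{S,b}''=\mathrm{diag}(\Delta y\Delta z\,\tilde I_{n_z+1}\otimes\tilde I_{n_y+1},\ \Delta y\Delta z\,\tilde I_{n_z+1}\otimes\tilde I_{n_y+1},\ \Delta x\Delta z\,\tilde I_{n_z+1}\otimes\tilde I_{n_x+1},\ \Delta x\Delta z\,\tilde I_{n_z+1}\otimes\tilde I_{n_x+1},\ \Delta x\Delta y\,\tilde I_{n_y+1}\otimes\tilde I_{n_x+1},\ \Delta x\Delta y\,\tilde I_{n_y+1}\otimes\tilde I_{n_x+1})$; $H_\perp=\frac{\hbar^2}{2m}L D_{\hat n}D_{S,b}''$. FDTD-Q scheme: real vectors $\psi_R^n\in\mathbb{R}^N$ and $\psi_I^{n-\frac12}\in\mathbb{R}^N$ ($n=0,\dots,n_t$), and arbitrary boundary vectors $g_R^n\in\mathbb{R}^M$, $g_I^{n+\frac12}\in\mathbb{R}^M$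 ($n=0,\dots,n_t-1$), satisfying for $n=0,\dots,n_t-1$: $\hbar D_V''\frac{\psi_R^{n+1}-\psi_R^n}{\Delta t}=H\psi_I^{n+\frac12}-H_\perp g_I^{n+\frac12}$ and $\hbar D_V''\frac{\psi_I^{n+\frac12}-\psi_I^{n-\frac12}}{\Delta t}=-H\psi_R^n+H_\perp g_R^n$. Let $\psi^n=\begin{bmatrix}\psi_R^n\\ \psi_I^{n-\frac12}\end{bmatrix}$, $g^{n+\frac12}=\begin{bmatrix}g_R^n\\ g_I^{n+\frac12}\end{bmatrix}$, $J_1=\begin{bmatrix}0&1\\-1&0\end{bmatrix}$. Total probability: $\mathcal{P}^n=(\psi^n)^T\mathbf{P}\psi^n$, $n=0,\dots,n_t$. Probability current: $\mathcal{I}_P^{n+\frac12}=\frac{2}{\hbar}\left(\frac{\psi^{n+1}+\psi^n}{2}\right)^T(J_1\otimes H_\perp)g^{n+\frac12}$, $n=0,\dots,n_t-1$. *)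

From HB Require Import structures.
From mathcomp Require Import all_boot all_order all_algebra.
From mathcomp Require Import mxtens complex.
From mathcomp Require Import reals.
Unset Printing Implicit Defensive.
Import Order.TTheory GRing.Theory Num.Theory.
Local Open Scope ring_scope.

Section FDTDQ.
Context {R : realType}.

Definition Itil (p : nat) : 'M[R]_p :=
  diag_mx (\row_(i < p) (if ((i : nat) == 0%N) || ((i : nat) == p.-1)
                         then 2^-1 else 1)).

(* W_p = [0_{p x 1} I_p] - [I_p 0_{p x 1}]  (p x (p+1)), written entrywise *)
Definition Wmx (p : nat) : 'M[R]_(p, p.+1) :=
  \matrix_(i < p, j < p.+1) (((j : nat) == i.+1)%:R - ((j : nat) == i)%:R).

(* e{p,q}: q x 1 column with 1 in (1-based) position p *)
Definition ecol (p q : nat) : 'M[R]_(q, 1) :=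
  \col_(i < q) ((i : nat) == p.-1)%:R.

Definition bdiag {m n} (A : 'M[R]_m) (B : 'M[R]_n) : 'M[R]_(m + n) :=
  block_mx A 0 0 B.

Definition castsq {m m'} (e : m = m') (A : 'M[R]_m) : 'M[R]_m' := castmx (e, e) A.

Local Notation "A *t B" := (tensmx A B) (at level 40, left associativity).

Section Grid.
Variables (nx ny nz : nat) (dx dy dz : R).

(* number of nodes N = (nx+1)(ny+1)(nz+1), node ordering i + (j-1)(nx+1) + ... *)
Definition Nn := (nz.+1 * (ny.+1 * nx.+1))%N.

(* D_U from nodal values U_{i,j,k} (0-based indices) *)
Definition nodeval (U : 'I_nx.+1 -> 'I_ny.+1 -> 'I_nz.+1 -> R) (k : 'I_Nn) : R :=
  let kz := (mxtens_unindex k).1 in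
  let kxy := (mxtens_unindex (mxtens_unindex k).2) in
  U kxy.2 kxy.1 kz.

Definition DUmx U : 'M[R]_Nn := diag_mx (\row_k nodeval U k).

Definition DVmx : 'M[R]_Nn :=
  (dx * dy * dz) *: (Itil nz.+1 *t (Itil ny.+1 *t Itil nx.+1)).

Definition Dxmx : 'M[R]_(Nn, nz.+1 * (ny.+1 * nx)) :=
  - (1%:M *t (1%:M *t (Wmx nx)^T)).
Definition Dymx : 'M[R]_(Nn, nz.+1 * (ny * nx.+1)) :=
  - (1%:M *t ((Wmx ny)^T *t 1%:M)).
Definition Dzmx : 'M[R]_(Nn, nz * (ny.+1 * nx.+1)) :=
  - ((Wmx nz)^T *t (1%:M *t 1%:M)).

Definition Dmx := row_mx Dxmx (row_mx Dymx Dzmx).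

Definition DSmx :=
  bdiag ((dy * dz) *: (Itil nz.+1 *t (Itil ny.+1 *t (1%:M : 'M[R]_nx))))
   (bdiag ((dx * dz) *: (Itil nz.+1 *t ((1%:M : 'M[R]_ny) *t Itil nx.+1)))
          ((dx * dy) *: ((1%:M : 'M[R]_nz) *t (Itil ny.+1 *t Itil nx.+1)))).

Definition Dlmx :=
  bdiag (dx *: (1%:M : 'M[R]_(nz.+1 * (ny.+1 * nx))))
   (bdiag (dy *: (1%:M : 'M[R]_(nz.+1 * (ny * nx.+1))))
          (dz *: (1%:M : 'M[R]_(nz * (ny.+1 * nx.+1))))).

Definition Hmx (hbar mass : R) U : 'M[R]_Nn :=
  (hbar ^+ 2 / (2 * mass)) *: (Dmx *m DSmx *m invmx Dlmx *m Dmx^T)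
  + DVmx *m DUmx U.

Definition Pmx (hbar mass dt : R) U : 'M[R]_(Nn + Nn) :=
  block_mx DVmx (- (dt / (2 * hbar)) *: Hmx hbar mass U)
           (- (dt / (2 * hbar)) *: Hmx hbar mass U) DVmx.

Definition LWmx := (1%:M : 'M[R]_nz.+1) *t ((1%:M : 'M[R]_ny.+1) *t ecol 1 nx.+1).
Definition LEmx := (1%:M : 'M[R]_nz.+1) *t ((1%:M : 'M[R]_ny.+1) *t ecol nx.+1 nx.+1).
Definition LSmx := (1%:M : 'M[R]_nz.+1) *t (ecol 1 ny.+1 *t (1%:M : 'M[R]_nx.+1)).
Definition LNmx := (1%:M : 'M[R]_nz.+1) *t (ecol ny.+1 ny.+1 *t (1%:M : 'M[R]_nx.+1)).
Definition LBmx := ecol 1 nz.+1 *t ((1%:M : 'M[R]_ny.+1) *t (1%:M : 'M[R]_nx.+1)).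
Definition LTmx := ecol nz.+1 nz.+1 *t ((1%:M : 'M[R]_ny.+1) *t (1%:M : 'M[R]_nx.+1)).

Definition Lmx := row_mx LWmx (row_mx LEmx (row_mx LSmx (row_mx LNmx (row_mx LBmx LTmx)))).

Definition Mm := (nz.+1 * (ny.+1 * 1) + (nz.+1 * (ny.+1 * 1) +
   (nz.+1 * (1 * nx.+1) + (nz.+1 * (1 * nx.+1) +
   (1 * (ny.+1 * nx.+1) + 1 * (ny.+1 * nx.+1))))))%N.

Lemma eW : (nz.+1 * ny.+1 = nz.+1 * (ny.+1 * 1))%N.
Proof. by rewrite muln1. Qed.
Lemma eS : (nz.+1 * nx.+1 = nz.+1 * (1 * nx.+1))%N.
Proof. by rewrite mul1n. Qed.
Lemma eB : (ny.+1 * nx.+1 = 1 * (ny.+1 * nx.+1))%N.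
Proof. by rewrite mul1n. Qed.

Definition Dnmx : 'M[R]_Mm :=
  bdiag (- 1%:M) (bdiag 1%:M (bdiag (- 1%:M) (bdiag 1%:M (bdiag (- 1%:M) 1%:M)))).

Definition DSbmx : 'M[R]_Mm :=
  bdiag (castsq eW ((dy * dz) *: (Itil nz.+1 *t Itil ny.+1)))
  (bdiag (castsq eW ((dy * dz) *: (Itil nz.+1 *t Itil ny.+1)))
  (bdiag (castsq eS ((dx * dz) *: (Itil nz.+1 *t Itil nx.+1)))
  (bdiag (castsq eS ((dx * dz) *: (Itil nz.+1 *t Itil nx.+1)))
  (bdiag (castsq eB ((dx * dy) *: (Itil ny.+1 *t Itil nx.+1)))
         (castsq eB ((dx * dy) *: (Itil ny.+1 *t Itil nx.+1))))))).

Definition Hperpmx (hbar mass : R) : 'M[R]_(Nn, Mm) :=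
  (hbar ^+ 2 / (2 * mass)) *: (Lmx *m Dnmx *m DSbmx).

(* (D''_V)^{-1/2}: D''_V is diagonal with positive entries *)
Definition DVmhalf : 'M[R]_Nn :=
  diag_mx (\row_k (Num.sqrt (DVmx k k))^-1).

Definition psivec (psiR psiI : nat -> 'cV[R]_Nn) (n : nat) : 'cV[R]_(Nn + Nn) :=
  col_mx (psiR n) (psiI n).

Definition TotProb hbar mass dt U psiR psiI (n : nat) : R :=
  ((psivec psiR psiI n)^T *m Pmx hbar mass dt U *m psivec psiR psiI n) 0 0.

(* J_1 (x) H_perp = [[0, H_perp], [-H_perp, 0]] *)
Definition ProbCurrent hbar mass (psiR psiI : nat -> 'cV[R]_Nn)
    (gR gI : nat -> 'cV[R]_Mm) (n : nat) : R :=
  (2 / hbar) *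
  (((2^-1 *: (psivec psiR psiI n.+1 + psivec psiR psiI n))^T
     *m block_mx 0 (Hperpmx hbar mass) (- Hperpmx hbar mass) 0
     *m col_mx (gR n) (gI n)) 0 0).

End Grid.

Definition is_spectral_radius {n} (A : 'M[R]_n) (r : R) : Prop :=
  let Ac := map_mx (fun x : R => (x%:C)%C) A in
  (exists z : R[i], eigenvalue Ac z /\ `|z| = (r%:C)%C) /\
  (forall z : R[i], eigenvalue Ac z -> `|z| <= (r%:C)%C).

End FDTDQ.

(* With c := dt / (2 hbar) and A := D_V'', the total probability is the quadratic form
   R^T A R + I^T A I - 2 c I^T H R.  Testing the two update equations against the old and new
   iterates and using the symmetry of A and H, all bulk terms cancel and only the boundary
   terms H_perp g survive: this is the discrete continuity equation.
   For positivity write R = S u and I = S v with S := A^(-1/2); the form becomes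
   |u|^2 + |v|^2 - dt u^T K v with K := hbar^-1 S H S symmetric.  The spectral theorem over
   R[i] bounds |u^T K v| by rho(K) (|u|^2 + |v|^2) / 2, and dt rho(K) <= 2 concludes. *)

From HB Require Import structures.
From mathcomp Require Import all_boot all_order all_algebra.
From mathcomp Require Import mxtens complex reals.
From mathcomp Require Import ring lra sesquilinear spectral.
Import Order.TTheory GRing.Theory Num.Theory.
Local Open Scope ring_scope.

Section BilinearForm.
Context {R : comPzRingType}.

Definition bform {n m} (x : 'cV[R]_n) (M : 'M[R]_(n, m)) (y : 'cV[R]_m) : R :=
  (x^T *m M *m y) 0 0.

Lemma bform_tr {n m} (x : 'cV[R]_n) M (y : 'cV[R]_m) : bform x M y = bform y M^T x.
Proof.
by rewrite /bform -[in LHS](trmxK (x^T *m M *m y)) [in LHS]mxE !trmx_mul trmxK mulmxA.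
Qed.

Lemma bform0m {n m} (x : 'cV[R]_n) (y : 'cV[R]_m) : bform x 0 y = 0.
Proof. by rewrite /bform mulmx0 mul0mx mxE. Qed.

Lemma bformNm {n m} (x : 'cV[R]_n) M (y : 'cV[R]_m) : bform x (- M) y = - bform x M y.
Proof. by rewrite /bform mulmxN mulNmx mxE. Qed.

Lemma bformZm {n m} (x : 'cV[R]_n) a M (y : 'cV[R]_m) : bform x (a *: M) y = a * bform x M y.
Proof. by rewrite /bform -scalemxAr -scalemxAl mxE. Qed.

Lemma bformZl {n m} (x : 'cV[R]_n) a M (y : 'cV[R]_m) : bform (a *: x) M y = a * bform x M y.
Proof. by rewrite /bform linearZ /= -!scalemxAl mxE. Qed.

Lemma bformDl {n m} (x x' : 'cV[R]_n) M (y : 'cV[R]_m) :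
  bform (x + x') M y = bform x M y + bform x' M y.
Proof. by rewrite /bform linearD /= !mulmxDl mxE. Qed.

Lemma bform_mulmx {n m k l} (S : 'M[R]_(k, n)) (T : 'M[R]_(l, m)) x M y :
  bform (S *m x) M (T *m y) = bform x (S^T *m M *m T) y.
Proof. by rewrite /bform trmx_mul !mulmxA. Qed.

Lemma bform_col_block {n1 n2 m1 m2} (x1 : 'cV[R]_n1) (x2 : 'cV[R]_n2)
    (A : 'M_(n1, m1)) B C (D : 'M_(n2, m2)) (y1 : 'cV[R]_m1) (y2 : 'cV[R]_m2) :
  bform (col_mx x1 x2) (block_mx A B C D) (col_mx y1 y2)
  = bform x1 A y1 + bform x1 B y2 + bform x2 C y1 + bform x2 D y2.
Proof.
rewrite /bform tr_col_mx mul_row_block mul_row_col !mulmxDl !mxE.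
by rewrite !addrA; congr (_ + _); rewrite -!addrA [X in _ + X]addrC.
Qed.

Lemma bform_diag {n} (x : 'cV[R]_n) (d : 'rV[R]_n) (y : 'cV[R]_n) :
  bform x (diag_mx d) y = \sum_j x j 0 * d 0 j * y j 0.
Proof. by rewrite /bform mul_mx_diag mxE; apply: eq_bigr => j _; rewrite !mxE. Qed.

End BilinearForm.

Section DiagonalMatrices.
Context {R : comUnitRingType}.

Lemma is_diag_mxZ {n} (a : R) (A : 'M[R]_n) : is_diag_mx A -> is_diag_mx (a *: A).
Proof.
by move=> /is_diag_mxP A_diag; apply/is_diag_mxP => i j ij; rewrite mxE A_diag ?mulr0.
Qed.

Lemma is_diag_tensmx {m n} (A : 'M[R]_m) (B : 'M[R]_n) :
  is_diag_mx A -> is_diag_mx B -> is_diag_mx (tensmx A B).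
Proof.
move=> /is_diag_mxP A_diag /is_diag_mxP B_diag; apply/is_diag_mxP => i j.
case: (mxtens_indexP i) => i1 i2; case: (mxtens_indexP j) => j1 j2.
rewrite tensmxE; have [<- | ?] := eqVneq i1 j1; last by rewrite A_diag ?mul0r.
by have [<- | ?] := eqVneq i2 j2; [rewrite eqxx | rewrite B_diag ?mulr0].
Qed.

Lemma trmx_diag {n} {A : 'M[R]_n} : is_diag_mx A -> A^T = A.
Proof. by case/diag_mxP => d ->; rewrite tr_diag_mx. Qed.

Lemma comm_mx_diag {n} {A B : 'M[R]_n} : is_diag_mx A -> is_diag_mx B -> comm_mx A B.
Proof. by case/diag_mxP => a -> /diag_mxP [b ->]; apply: diag_mx_comm. Qed.

Lemma comm_mx_invmx {n} {A B : 'M[R]_n} : comm_mx A B -> comm_mx (invmx A) B.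
Proof.
rewrite /comm_mx => AB; have [A_unit | /negPf A_nonunit] := boolP (A \in unitmx).
  by apply: (canLR (mulKmx A_unit)); rewrite mulmxA AB mulmxK.
by rewrite /invmx A_nonunit.
Qed.

Lemma trmx_mul_diag_invmx {m n} (D : 'M[R]_(m, n)) (E F : 'M[R]_n) :
  is_diag_mx E -> is_diag_mx F ->
  (D *m E *m invmx F *m D^T)^T = D *m E *m invmx F *m D^T.
Proof.
move=> E_diag F_diag; rewrite !trmx_mul trmxK trmx_inv !trmx_diag // !mulmxA.
by rewrite -(mulmxA D) -(comm_mx_invmx (comm_mx_diag F_diag E_diag)) mulmxA.
Qed.

End DiagonalMatrices.

Definition invsqrt_diag {R : rcfType} {n} (A : 'M[R]_n) : 'M[R]_n :=
  diag_mx (\row_k (Num.sqrt (A k k))^-1).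

Lemma invsqrt_diag_congr {R : rcfType} {n} (A : 'M[R]_n) :
  is_diag_mx A -> (forall k, 0 < A k k) ->
  invsqrt_diag A *m A *m invsqrt_diag A = 1%:M.
Proof.
move=> /diag_mxP [d A_d] A_gt0; rewrite {2}A_d !mulmx_diag.
apply/matrixP => i j; rewrite !mxE; congr (_ *+ _); rewrite A_d mxE eqxx mulr1n.
have d_gt0 : 0 < d 0 i by have := A_gt0 i; rewrite A_d mxE eqxx mulr1n.
have sqrt_neq0 : Num.sqrt (d 0 i) != 0 by rewrite gt_eqF ?sqrtr_gt0.
by rewrite -{2}(sqr_sqrtr (ltW d_gt0)) expr2 mulrA mulVf // mul1r mulfV.
Qed.

Definition prob_mx {R : pzRingType} {n} (A H : 'M[R]_n) (c : R) : 'M_(n + n) :=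
  block_mx A (- c *: H) (- c *: H) A.

Section LeapfrogBalance.
Context {R : numFieldType} {hb dt : R}.
Hypotheses (hb_neq0 : hb != 0) (dt_neq0 : dt != 0).

Lemma bform_leapfrog_step {n m k} {A : 'M[R]_n} {B : 'M_(n, m)} {C : 'M_(n, k)}
    {X Y : 'cV_n} {y z} (x : 'cV_n) :
  hb *: (A *m (dt^-1 *: (Y - X))) = B *m y + C *m z ->
  bform x A Y = bform x A X + dt / hb * (bform x B y + bform x C z).
Proof.
move=> step; have AY : A *m Y = A *m X + (dt / hb) *: (B *m y + C *m z).
  by rewrite -step scalerA divfK // -scalemxAr scalerA mulfV // scale1r mulmxBr addrC subrK.
by rewrite /bform -!mulmxA AY mulmxDr -scalemxAr mulmxDr !mxE.
Qed.

Lemma leapfrog_prob_balance {n m} {A H : 'M[R]_n} {Hp : 'M[R]_(n, m)}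
    {R0 R1 I0 I1 : 'cV_n} {gR gI : 'cV_m} :
  A^T = A -> H^T = H ->
  hb *: (A *m (dt^-1 *: (R1 - R0))) = H *m I1 - Hp *m gI ->
  hb *: (A *m (dt^-1 *: (I1 - I0))) = - (H *m R0) + Hp *m gR ->
  bform (col_mx R1 I1) (prob_mx A H (dt / (2 * hb))) (col_mx R1 I1)
  - bform (col_mx R0 I0) (prob_mx A H (dt / (2 * hb))) (col_mx R0 I0) =
  - (dt * ((2 / hb) * bform (2^-1 *: (col_mx R1 I1 + col_mx R0 I0))
                           (block_mx 0 Hp (- Hp) 0) (col_mx gR gI))).
Proof.
move=> A_sym H_sym stepR stepI.
rewrite -mulNmx in stepR; rewrite -mulNmx in stepI.
have symA x y : bform x A y = bform y A x by rewrite bform_tr A_sym.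
have symH x y : bform x H y = bform y H x by rewrite bform_tr H_sym.
have R1R1 := bform_leapfrog_step R1 stepR; have R0R1 := bform_leapfrog_step R0 stepR.
have I1I1 := bform_leapfrog_step I1 stepI; have I0I1 := bform_leapfrog_step I0 stepI.
rewrite !bform_col_block bformZl !bformDl !bform_col_block.
rewrite !bform0m !bformNm !bformZm in R1R1 R0R1 I1I1 I0I1 *.
rewrite R1R1 I1I1 (symA R1) (symA I1) R0R1 I0I1 (symH I1 R1) (symH I0 R0) (symH I1 R0).
by field.
Qed.

End LeapfrogBalance.

Section NormalFormBound.
Context {C : numClosedFieldType}.
Import Num.Def.
Local Open Scope sesquilinear_scope.

Lemma spectral_diag_eigenvalue {n} (A : 'M[C]_n) i :
  A \is normalmx -> eigenvalue A (spectral_diag A 0 i).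
Proof.
move=> /orthomx_spectralP; set P := spectralmx A => A_eq.
have P_unit : P \in unitmx := spectral_unit A.
apply/eigenvalueP; exists (row i P).
  rewrite [in LHS]A_eq rowE !mulmxA mulmxK //.
  by rewrite -(rowE i (diag_mx _)) row_diag_mx scalemxAl.
apply/eqP => /(congr1 (mulmx^~ (invmx P))).
rewrite rowE mulmxK // mul0mx => /matrixP /(_ 0 i).
by rewrite !mxE !eqxx /=; apply/eqP; rewrite oner_eq0.
Qed.

Lemma diag_form_bound {n} (d : 'rV[C]_n) (r : C) (x y : 'cV[C]_n) :
  (forall j, `|d 0 j| <= r) ->
  `|bform (map_mx conjC x) (diag_mx d) y|
    <= r / 2 * (bform (map_mx conjC x) 1%:M x + bform (map_mx conjC y) 1%:M y).
Proof.
move=> d_le_r; rewrite -diag_const_mx !bform_diag.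
apply: le_trans (ler_norm_sum _ _ _) _.
rewrite -big_split /= mulr_sumr; apply: ler_sum => j _.
rewrite !mxE !mulr1 -!normCKC !normrM norm_conjC.
have r_ge0 : 0 <= r := le_trans (normr_ge0 _) (d_le_r j).
apply: le_trans (_ : `|x j 0| * r * `|y j 0| <= _).
  by rewrite ler_wpM2r // ler_wpM2l // d_le_r.
rewrite mulrAC [r / 2 * _]mulrC mulrA [X in _ <= X]mulrAC ler_wpM2r //.
exact: (real_leif_mean_square (normr_real _) (normr_real _)).1.
Qed.

Lemma normalmx_form_bound {n} {A : 'M[C]_n} {r : C} (x y : 'cV[C]_n) :
  A \is normalmx -> (forall z, eigenvalue A z -> `|z| <= r) ->
  `|bform (map_mx conjC x) A y|
    <= r / 2 * (bform (map_mx conjC x) 1%:M x + bform (map_mx conjC y) 1%:M y).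
Proof.
move=> A_normal spec; move/orthomx_spectralP: (A_normal).
set P := spectralmx A; have P_unit : P \in unitmx := spectral_unit A.
rewrite invmx_unitary ?spectral_unitarymx // => ->.
have change_basis M u w :
    bform (map_mx conjC u) (P ^t* *m M *m P) w = bform (map_mx conjC (P *m u)) M (P *m w).
  by rewrite map_mxM bform_mulmx map_trmx.
have one : 1%:M = P ^t* *m 1%:M *m P.
  by rewrite mulmx1 -invmx_unitary ?spectral_unitarymx // mulVmx.
rewrite [1%:M]one !change_basis; apply: diag_form_bound => j.
exact/spec/spectral_diag_eigenvalue.
Qed.

End NormalFormBound.

Section RealFormBound.
Context {R : realType}.
Local Notation toC := (real_complex R).

Lemma bform1_ge0 {n} (x : 'cV[R]_n) : 0 <= bform x 1%:M x.
Proof.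
rewrite -diag_const_mx bform_diag; apply: sumr_ge0 => i _.
by rewrite mxE mulr1 -expr2 sqr_ge0.
Qed.

Lemma spectral_radius_ge0 {n} {K : 'M[R]_n} {rho : R} :
  is_spectral_radius K rho -> 0 <= rho.
Proof. by case=> -[z [_ z_rho]] _; rewrite -lecR -z_rho normr_ge0. Qed.

Lemma symmetric_form_bound {n} {K : 'M[R]_n} {rho : R} (u v : 'cV[R]_n) :
  K^T = K -> is_spectral_radius K rho ->
  `|bform u K v| <= rho / 2 * (bform u 1%:M u + bform v 1%:M v).
Proof.
move=> K_sym [_ rhoK].
have conj_toC m k (M : 'M[R]_(m, k)) : map_mx Num.conj (map_mx toC M) = map_mx toC M.
  apply/matrixP => i j; rewrite !mxE conj_Creal //.
  by apply/complex_realP; exists (M i j).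
have bform_toC m k (x : 'cV[R]_m) (M : 'M[R]_(m, k)) y :
    ((bform x M y)%:C)%C = bform (map_mx toC x) (map_mx toC M) (map_mx toC y).
  by rewrite /bform map_trmx -!map_mxM [RHS]mxE.
have norm_toC (a : R) : `|(a%:C)%C| = (`|a|%:C)%C.
  by rewrite normc_def /= expr0n /= addr0 sqrtr_sqr.
have K_normal : map_mx toC K \is normalmx.
  by apply/normalmxP; rewrite map_trmx conj_toC K_sym.
have := normalmx_form_bound (map_mx toC u) (map_mx toC v) K_normal rhoK.
rewrite !conj_toC -(map_mx1 toC) -!bform_toC -lecR -norm_toC.
by rewrite !rmorphM rmorphD fmorphV rmorph_nat.
Qed.

Lemma leapfrog_prob_ge0 {n} {A H S : 'M[R]_n} {hb dt rho : R} (r i : 'cV[R]_n) :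
  0 < hb -> 0 <= dt -> dt * rho <= 2 ->
  S^T = S -> S *m A *m S = 1%:M -> H^T = H ->
  is_spectral_radius (hb^-1 *: (S *m H *m S)) rho ->
  0 <= bform (col_mx r i) (prob_mx A H (dt / (2 * hb))) (col_mx r i).
Proof.
move=> hb_gt0 dt_ge0 dt_rho S_sym SAS H_sym rhoK.
have [_ S_unit] := mulmx1_unit SAS.
set K := hb^-1 *: (S *m H *m S) in rhoK.
have K_sym : K^T = K by rewrite /K linearZ /= !trmx_mul S_sym H_sym mulmxA.
have cross x y : bform x (S *m (- (dt / (2 * hb)) *: H) *m S) y = - (dt / 2) * bform x K y.
  rewrite -scalemxAr -scalemxAl !bformZm; field; exact: lt0r_neq0.
have [u ->] : exists u, r = S *m u by exists (invmx S *m r); rewrite mulKVmx.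
have [v ->] : exists v, i = S *m v by exists (invmx S *m i); rewrite mulKVmx.
rewrite bform_col_block !bform_mulmx S_sym SAS !cross (bform_tr v) K_sym.
have := symmetric_form_bound u v K_sym rhoK.
have := ler_norm (bform u K v); have := bform1_ge0 u; have := bform1_ge0 v.
nra.
Qed.

End RealFormBound.

Section Grid.
Context {R : realType}.
Variables (nx ny nz : nat) (dx dy dz : R).

Lemma Itil_gt0 p i : 0 < (Itil p : 'M[R]_p) i i.
Proof. by rewrite !mxE eqxx mulr1n; case: ifP; rewrite ?invr_gt0. Qed.

Lemma is_diag_bdiag {m n} (A : 'M[R]_m) (B : 'M[R]_n) :
  is_diag_mx A -> is_diag_mx B -> is_diag_mx (bdiag A B).
Proof. by move=> A_diag B_diag; rewrite is_diag_block_mx // !eqxx A_diag B_diag. Qed.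

Lemma is_diag_DVmx : is_diag_mx (DVmx nx ny nz dx dy dz).
Proof. by apply: is_diag_mxZ; do 2?apply: is_diag_tensmx; apply: diag_mx_is_diag. Qed.

Lemma DVmx_gt0 k : 0 < dx -> 0 < dy -> 0 < dz -> 0 < DVmx nx ny nz dx dy dz k k.
Proof.
move=> dx_gt0 dy_gt0 dz_gt0; rewrite mxE !mulr_gt0 //.
by rewrite mxE mulr_gt0 ?Itil_gt0 // mxE mulr_gt0 ?Itil_gt0.
Qed.

Lemma Hmx_sym hb mass U :
  (Hmx nx ny nz dx dy dz hb mass U)^T = Hmx nx ny nz dx dy dz hb mass U.
Proof.
have DS_diag : is_diag_mx (DSmx nx ny nz dx dy dz).
  by do 2?apply: is_diag_bdiag; apply: is_diag_mxZ; do 2?apply: is_diag_tensmx;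
    rewrite ?scalar_mx_is_diag ?diag_mx_is_diag.
have Dl_diag : is_diag_mx (Dlmx nx ny nz dx dy dz).
  by do 2?apply: is_diag_bdiag; apply: is_diag_mxZ; rewrite scalar_mx_is_diag.
rewrite /Hmx linearD linearZ /= trmx_mul_diag_invmx // trmx_mul.
have DU_diag : is_diag_mx (DUmx nx ny nz U) := diag_mx_is_diag _.
by rewrite !trmx_diag ?is_diag_DVmx // comm_mx_diag ?is_diag_DVmx.
Qed.

End Grid.

Theorem theorem1 (R : realType) (hbar mass dx dy dz dt : R) (nx ny nz nt : nat)
  (U : 'I_nx.+1 -> 'I_ny.+1 -> 'I_nz.+1 -> R)
  (psiR psiI : nat -> 'cV[R]_(Nn nx ny nz))
  (gR gI : nat -> 'cV[R]_(Mm nx ny nz)) (rho : R) :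
  0 < hbar -> 0 < mass -> 0 < dx -> 0 < dy -> 0 < dz ->
  (0 < nx)%N -> (0 < ny)%N -> (0 < nz)%N -> (0 < nt)%N ->
  is_spectral_radius
    (hbar^-1 *: (DVmhalf nx ny nz dx dy dz *m Hmx nx ny nz dx dy dz hbar mass U
                 *m DVmhalf nx ny nz dx dy dz)) rho ->
  0 < dt -> dt < 2 / rho ->
  (forall n : nat, (n < nt)%N ->
     hbar *: (DVmx nx ny nz dx dy dz *m (dt^-1 *: (psiR n.+1 - psiR n)))
     = Hmx nx ny nz dx dy dz hbar mass U *m psiI n.+1
       - Hperpmx nx ny nz dx dy dz hbar mass *m gI n) ->
  (forall n : nat, (n < nt)%N ->
     hbar *: (DVmx nx ny nz dx dy dz *m (dt^-1 *: (psiI n.+1 - psiI n)))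
     = - (Hmx nx ny nz dx dy dz hbar mass U *m psiR n)
       + Hperpmx nx ny nz dx dy dz hbar mass *m gR n) ->
  (forall n : nat, (n <= nt)%N ->
     0 <= TotProb nx ny nz dx dy dz hbar mass dt U psiR psiI n) /\
  (forall n : nat, (n < nt)%N ->
     (TotProb nx ny nz dx dy dz hbar mass dt U psiR psiI n.+1
      - TotProb nx ny nz dx dy dz hbar mass dt U psiR psiI n) / dt
     = - ProbCurrent nx ny nz dx dy dz hbar mass psiR psiI gR gI n).
Proof.
move=> hbar_gt0 _ dx_gt0 dy_gt0 dz_gt0 _ _ _ _ rhoK dt_gt0 dt_lt stepR stepI.
have DV_sym := trmx_diag (is_diag_DVmx nx ny nz dx dy dz).
have H_sym := Hmx_sym nx ny nz dx dy dz hbar mass U.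
split=> [n _ | n lt_n_nt].
  have dt_rho : dt * rho <= 2.
    have [-> | rho_neq0] := eqVneq rho 0; first by rewrite mulr0.
    have rho_gt0 : 0 < rho by rewrite lt_def rho_neq0 (spectral_radius_ge0 rhoK).
    by rewrite -ler_pdivlMr // ltW.
  apply: (leapfrog_prob_ge0 _ _ hbar_gt0 (ltW dt_gt0) dt_rho (tr_diag_mx _) _ H_sym rhoK).
  (* [DVmhalf] unfolds to [invsqrt_diag DVmx]. *)
  apply: invsqrt_diag_congr (is_diag_DVmx _ _ _ _ _ _) _ => k.
  exact: DVmx_gt0.
have := leapfrog_prob_balance (lt0r_neq0 hbar_gt0) (lt0r_neq0 dt_gt0) DV_sym H_sym
  (stepR n lt_n_nt) (stepI n lt_n_nt).
rewrite /TotProb /ProbCurrent => ->.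
by rewrite mulNr mulrC mulKf // gt_eqF.
Qed.
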